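(* Let ${\mathsf q}$ be a prime power, $t\in\{0,\ldots,{\mathsf K}-1\}$, $\mathbb{D}\in\mathbb{F}_{\mathsf q}^{{\mathsf K}\times{\mathsf N}}$, $\mathcal L$ a leader set, and $\mathcal A\subseteq[{\mathsf K}]\setminus\mathcal L$ with $|\mathcal A|=t+1$. Then, for every choice of the subfiles $F_{i,\mathcal W}$, $$W_{\mathcal A}=\sum_{\substack{\mathcal S\subseteq\mathcal A\cup\mathcal L:\ |\mathcal S|=t+1,\ \mathcal S\neq\mathcal A}}\beta_{\mathcal A,\mathcal S}\,W_{\mathcal S},\qquad \beta_{\mathcal A,\mathcal S}=(-1)^{1+\mathrm{Tot}(\overline{\mathrm{Ind}}_{\mathcal S})}\det\!\big(\mathbb{D}'_{\mathcal A\setminus\mathcal S,\ \mathrm{Ind}_{\mathcal S}}\big).$$ In particular every message $W_{\mathcal S}$ on the right-hand side satisfies $\mathcal S\cap\mathcal L\neq\emptyset$.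
   Context: Notation: sets of integers are listed increasingly, $\mathcal S(1)<\mathcal S(2)<\cdots$. $\mathbb{D}$ has rows $\mathbf y_k=(y_{k,1},\ldots,y_{k,{\mathsf N}})$. A leader set is $\mathcal L\subseteq[{\mathsf K}]$ with $|\mathcal L|=\mathrm{rank}_{\mathsf q}(\mathbb{D}_{\mathcal L})=\mathrm{rank}_{\mathsf q}(\mathbb{D})$, where $\mathbb{D}_{\mathcal L}$ is the submatrix of rows in $\mathcal L$. For each $k\in[{\mathsf K}]$ let $\mathbf x_k=(x_{k,1},\ldots,x_{k,|\mathcal L|})\in\mathbb{F}_{\mathsf q}^{|\mathcal L|}$ be the unique vector with $\mathbf y_k=\sum_{j}x_{k,j}\mathbf y_{\mathcal L(j)}$, and let $\mathbb{D}'$ be the ${\mathsf K}\times|\mathcal L|$ matrix with rows $\mathbf x_k$. Subfiles $F_{i,\mathcal W}\in\mathbb{F}_{\mathsf q}^{\ell}$ for $i\in[{\mathsf N}]$, $\mathcal W\subseteq[{\mathsf K}]$, $|\mathcal W|=t$. Blocks $B_{k,\mathcal W}=\sum_n y_{k,n}F_{n,\mathcal W}$. For $\mathcal S\subseteq[{\mathsf K}]$, $|\mathcal S|=t+1$, let $\mathcal L_{\mathcal S}=\mathcal S\cap\mathcal L$, $\mathcal N_{\mathcal S}=\mathcal S\setminus\mathcal L$, and $W_{\mathcal S}=\sum_{i\in[|\mathcal L_{\mathcal S}|]}(-1)^{i-1}B_{\mathcal L_{\mathcal S}(i),\mathcal S\setminus\{\mathcal L_{\mathcal S}(i)\}}+\sum_{j\in[|\mathcal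 N_{\mathcal S}|]}(-1)^{j-1}B_{\mathcal N_{\mathcal S}(j),\mathcal S\setminus\{\mathcal N_{\mathcal S}(j)\}}$. For $\mathcal S\subseteq\mathcal A\cup\mathcal L$: $\mathrm{Ind}_{\mathcal S}=\{i\in[|\mathcal L|]:\mathcal L(i)\in\mathcal S\}$, $\overline{\mathrm{Ind}}_{\mathcal S}=\{i\in[t+1]:\mathcal A(i)\notin\mathcal S\}$, and $\mathrm{Tot}(\mathcal X)$ is the sum of the elements of $\mathcal X$. When $|\mathcal S|=t+1$, $|\mathcal A\setminus\mathcal S|=|\mathrm{Ind}_{\mathcal S}|$, and $\mathbb{D}'_{\mathcal A\setminus\mathcal S,\mathrm{Ind}_{\mathcal S}}$ is the square submatrix of $\mathbb{D}'$ with rows indexed by $\mathcal A\setminus\mathcal S$ and columns indexed by $\mathrm{Ind}_{\mathcal S}$, both taken in increasing order. *)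

From HB Require Import structures.
From mathcomp Require Import all_boot all_order all_algebra all_field.
Set Implicit Arguments. Unset Strict Implicit. Unset Printing Implicit Defensive.
Import GRing.Theory.
Local Open Scope ring_scope.

(* Users are 'I_K (0-based; only the order matters). For a set X : {set 'I_K},
   enum X lists its elements increasingly, and enum_val j (j : 'I_#|X|) is the
   (j+1)-th smallest element X(j+1) of X. *)

Section Defs.
Variables (F : fieldType) (K N l : nat).

Definition rows_of (D : 'M[F]_(K, N)) (X : {set 'I_K}) : 'M[F]_(#|X|, N) :=
  \matrix_(j < #|X|) row (@enum_val _ (mem X) j) D.

Definition leader_set (D : 'M[F]_(K, N)) (L : {set 'I_K}) : Prop :=
  #|L| = \rank (rows_of D L) /\ \rank (rows_of D L) = \rank D.

Definition block (D : 'M[F]_(K, N)) (Fs : 'I_N -> {set 'I_K} -> 'rV[F]_l)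
  (k : 'I_K) (W : {set 'I_K}) : 'rV[F]_l :=
  \sum_(n < N) D k n *: Fs n W.

(* sum_{i in [|X|]} (-1)^{i-1} B_{X(i), S \ {X(i)}}  (written 0-based) *)
Definition alt_part (D : 'M[F]_(K, N)) (Fs : 'I_N -> {set 'I_K} -> 'rV[F]_l)
  (X S : {set 'I_K}) : 'rV[F]_l :=
  \sum_(i < #|X|) (-1) ^+ i *:
     block D Fs (@enum_val _ (mem X) i) (S :\ @enum_val _ (mem X) i).

Definition Wmsg (D : 'M[F]_(K, N)) (Fs : 'I_N -> {set 'I_K} -> 'rV[F]_l)
  (L S : {set 'I_K}) : 'rV[F]_l :=
  alt_part D Fs (S :&: L) S + alt_part D Fs (S :\: L) S.

(* Ind_S = {i in [|L|] : L(i) in S}, as a set of 0-based positions *)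
Definition Ind (L S : {set 'I_K}) : {set 'I_#|L|} :=
  [set j : 'I_#|L| | @enum_val _ (mem L) j \in S].

(* Tot(bar Ind_S), with bar Ind_S = {i in [t+1] : A(i) notin S}, 1-based *)
Definition TotBarInd (A S : {set 'I_K}) : nat :=
  (\sum_(i < #|A| | @enum_val _ (mem A) i \notin S) i.+1)%N.

Definition sub_entry (r : nat) (M : 'M[F]_(K, r)) (rs : seq 'I_K) (cs : seq 'I_r)
  (i j : nat) : F :=
  match onth rs i, onth cs j with
  | Some a, Some b => M a b
  | _, _ => 0
  end.

Definition minor (r : nat) (M : 'M[F]_(K, r)) (rs : seq 'I_K) (cs : seq 'I_r) : F :=
  \det (\matrix_(i < size rs, j < size rs) sub_entry M rs cs i j).

Definition beta (L : {set 'I_K}) (D' : 'M[F]_(K, #|L|)) (A S : {set 'I_K}) : F :=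
  (-1) ^+ (1 + TotBarInd A S) * minor D' (enum (A :\: S)) (enum (Ind L S)).

End Defs.

From HB Require Import structures.
From mathcomp Require Import all_boot all_order all_algebra.
From mathcomp Require Import zify ring.
Set Implicit Arguments. Unset Strict Implicit. Unset Printing Implicit Defensive.
Import GRing.Theory.
Local Open Scope ring_scope.

(* Put alpha_{A,S} := -beta_{A,S} for S <> A and alpha_{A,A} := 1; the claim is that
   sum_S alpha_{A,S} W_S = 0 over all (t+1)-subsets S of A u L.  Expanding every
   message into blocks B_{k,S\{k}} and every block B_{k,W} into leader blocks
   sum_j D'_{k,j} B_{L(j),W}, the coefficient of B_{L(j),W} (|W| = t) collects the
   non-leaders k in A \ W and, since D' restricted to the leader rows is the identity,
   only the leader k = L(j).  The non-leader part is, up to sign, the Laplace expansion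
   along its column j of the minor of D' with rows A \ W and columns Ind_W u {j}; the
   leader term is the same minor with the opposite sign.  If L(j) is in W there is no
   leader term, but then the column j occurs twice and the minor vanishes. *)

Definition rem_nth (T : Type) (i : nat) (s : seq T) := take i s ++ drop i.+1 s.

Lemma onth_rem_nth (T : Type) (s : seq T) i a :
  onth (rem_nth i s) a = onth s (bump i a).
Proof.
elim: s i a => [|x s IH] [|i] a; rewrite /rem_nth /= ?onth0n ?drop0 //.
by case: a => [|a] //=; rewrite -/(rem_nth i s) IH /bump ltnS addnS.
Qed.

Lemma size_rem_nth (T : Type) (s : seq T) i :
  (i < size s)%N -> size (rem_nth i s) = (size s).-1.
Proof. by move=> lt_is; rewrite /rem_nth size_cat size_take size_drop lt_is; lia. Qed.

Lemma rem_index (T : eqType) (s : seq T) x : rem x s = rem_nth (index x s) s.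
Proof.
elim: s => [|y s IH] //=; rewrite /rem_nth /=.
by case: eqP => [->|_] /=; rewrite ?drop0 ?IH.
Qed.

Section Minors.
Variables (F : fieldType) (K r : nat) (M : 'M[F]_(K, r)).

Lemma minor_expand_col (rs : seq 'I_K) cs p n :
  size rs = n.+1 -> (p <= n)%N ->
  minor M rs cs = \sum_(i < n.+1) (-1) ^+ (i + p) * sub_entry M rs cs i p *
     minor M (rem_nth i rs) (rem_nth p cs).
Proof.
move=> srs le_pn; rewrite /minor srs.
rewrite (expand_det_col _ (Ordinal (le_pn : (p < n.+1)%N))).
apply: eq_bigr => i _; rewrite /cofactor mxE /= mulrA [_ * sub_entry _ _ _ _ _]mulrC.
rewrite size_rem_nth srs //=; congr (_ * \det _); apply/matrixP => a b.
by rewrite !mxE /sub_entry !onth_rem_nth.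
Qed.

Lemma minor_expand_uniq (rs : seq 'I_K) cs cs' p j :
  uniq rs -> (p < size rs)%N -> onth cs p = Some j -> rem_nth p cs = cs' ->
  minor M rs cs = (-1) ^+ p * \sum_(k <- rs)
      (-1) ^+ index k rs * M k j * minor M (rem_nth (index k rs) rs) cs'.
Proof.
case: rs => [//|x0 rs'] uniq_rs lt_p csp <-; set rs := x0 :: rs'.
rewrite (minor_expand_col cs (n := size rs') (p := p)) // -/rs.
rewrite (big_nth x0) big_mkord mulr_sumr; apply: eq_bigr => i _.
rewrite index_uniq // /sub_entry csp onthE (nth_map x0) //.
by rewrite addnC exprD; ring.
Qed.

Lemma minor_eq0_dup_col (rs : seq 'I_K) cs b1 b2 :
  (b1 < size rs)%N -> (b2 < size rs)%N -> b1 != b2 -> onth cs b1 = onth cs b2 ->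
  minor M rs cs = 0.
Proof.
move=> lt_b1 lt_b2 ne_b E; rewrite /minor -det_tr.
apply: (determinant_alternate (i1 := Ordinal lt_b1) (i2 := Ordinal lt_b2)) => // a.
by rewrite !mxE /sub_entry /= E.
Qed.

End Minors.

Section OrdinalSets.
Variable n : nat.
Implicit Types (X : {set 'I_n}) (k : 'I_n).

Definition ord_ltn : rel 'I_n := fun a b => (a < b)%N.

Lemma ord_ltn_trans : transitive ord_ltn.
Proof. by move=> a b c; apply: ltn_trans. Qed.

Lemma sorted_enum_set X : sorted ord_ltn (enum X).
Proof.
have : sorted ord_ltn (Finite.enum 'I_n).
  by rewrite -enumT; have := iota_ltn_sorted 0 n; rewrite -val_enum_ord sorted_map.
exact: (sorted_filter ord_ltn_trans).
Qed.

Lemma index_sorted_ord (s : seq 'I_n) k : sorted ord_ltn s -> k \in s ->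
  index k s = count (fun y : 'I_n => (y < k)%N) s.
Proof.
elim: s => [|y s IH] //= sorted_ys.
have /allP y_min := order_path_min ord_ltn_trans sorted_ys.
rewrite in_cons; case: (eqVneq y k) => [<-|ne_yk] /= k_ys.
  rewrite ltnn; apply/esym/eqP; rewrite -leqn0 leqNgt -has_count.
  by apply/hasP => -[z /y_min]; rewrite /ord_ltn; lia.
by rewrite IH ?(path_sorted sorted_ys) //; have := y_min k k_ys; rewrite /ord_ltn => ->.
Qed.

Lemma index_enum_set X k : k \in X ->
  index k (enum X) = #|[set y in X | (y < k)%N]|.
Proof.
move=> kX; rewrite index_sorted_ord ?sorted_enum_set ?mem_enum //.
rewrite cardE -size_filter /enum_mem -filter_predI; congr size.
by apply: eq_filter => y; rewrite /= inE andbC.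
Qed.

Lemma ltn_enum_val X (i j : 'I_#|X|) : (enum_val i < enum_val j)%N = (i < j)%N.
Proof.
have lt_ev (a b : 'I_#|X|) : (a < b)%N -> (@enum_val _ (mem X) a < enum_val b)%N.
  move=> lt_ab; have x0 := enum_val a; rewrite !(enum_val_nth x0).
  by apply: (sorted_ltn_nth ord_ltn_trans x0 (sorted_enum_set X)); rewrite // inE -cardE.
case: (ltngtP i j) => [/lt_ev //|/lt_ev lt_ji|/val_inj ->]; last by rewrite ltnn.
by apply/negbTE; rewrite -leqNgt ltnW.
Qed.

End OrdinalSets.

Lemma enum_setD1 (T : finType) (X : {set T}) x :
  enum (X :\ x) = rem_nth (index x (enum X)) (enum X).
Proof.
rewrite -rem_index rem_filter ?enum_uniq // /enum_mem -filter_predI.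
by apply: eq_filter => y; rewrite !inE.
Qed.

Lemma index_enum_val (T : finType) (X : {set T}) (i : 'I_#|X|) :
  index (enum_val i) (enum X) = i.
Proof.
have x0 := enum_val i; rewrite (enum_val_nth x0) index_uniq ?enum_uniq //.
by rewrite -cardE.
Qed.

Section Messages.
Variables (F : fieldType) (K N l : nat) (D : 'M[F]_(K, N)) (L : {set 'I_K}).
Variables (D' : 'M[F]_(K, #|L|)) (Fs : 'I_N -> {set 'I_K} -> 'rV[F]_l).
Hypothesis D_comb : forall k : 'I_K,
  row k D = \sum_(j < #|L|) D' k j *: row (@enum_val _ (mem L) j) D.

Lemma row_coords_mul k : row k D' *m rows_of D L = row k D.
Proof. by rewrite mulmx_sum_row D_comb; apply: eq_bigr => j _; rewrite rowK mxE. Qed.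

Lemma leader_coords : leader_set D L ->
  forall i j : 'I_#|L|, D' (@enum_val _ (mem L) i) j = (i == j)%:R.
Proof.
move=> [card_L _] i j.
have free : row_free (rows_of D L) by rewrite /row_free -card_L.
have : row (enum_val i) D' *m rows_of D L = delta_mx 0 i *m rows_of D L.
  by rewrite row_coords_mul -rowE rowK.
by move/(row_free_inj free)/matrixP/(_ 0 j); rewrite !mxE eqxx eq_sym.
Qed.

Lemma block_comb k W :
  block D Fs k W = \sum_(j < #|L|) D' k j *: block D Fs (@enum_val _ (mem L) j) W.
Proof.
have D_entry n : D k n = \sum_(j < #|L|) D' k j * D (@enum_val _ (mem L) j) n.
  by have := congr1 (fun M : 'rV_N => M 0 n) (D_comb k); rewrite mxE summxE => ->;
     apply: eq_bigr => j _; rewrite !mxE.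
rewrite /block; under eq_bigr do rewrite D_entry scaler_suml.
rewrite exchange_big /=; apply: eq_bigr => j _.
by rewrite scaler_sumr; apply: eq_bigr => n _; rewrite scalerA.
Qed.

End Messages.

Definition msg_sign (F : fieldType) K (L S : {set 'I_K}) (k : 'I_K) : F :=
  (-1) ^+ index k (enum (if k \in L then S :&: L else S :\: L)).

Lemma alt_partE (F : fieldType) K N l (D : 'M[F]_(K, N))
  (Fs : 'I_N -> {set 'I_K} -> 'rV[F]_l) (X S : {set 'I_K}) :
  alt_part D Fs X S = \sum_(k in X) (-1) ^+ index k (enum X) *: block D Fs k (S :\ k).
Proof.
rewrite /alt_part (big_enum_val (A := mem X)) /=; apply: eq_bigr => i _.
by rewrite index_enum_val.
Qed.

Lemma WmsgE (F : fieldType) K N l (D : 'M[F]_(K, N))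
  (Fs : 'I_N -> {set 'I_K} -> 'rV[F]_l) (L S : {set 'I_K}) :
  Wmsg D Fs L S = \sum_(k in S) msg_sign F L S k *: block D Fs k (S :\ k).
Proof.
rewrite /Wmsg !alt_partE [RHS](big_setID L) /=.
congr (_ + _); apply: eq_bigr => k; rewrite inE /msg_sign.
  by case/andP=> _ ->.
by case/andP=> /negbTE ->.
Qed.

Section IndexBookkeeping.
Variables (K : nat) (L A : {set 'I_K}).
Implicit Types (W : {set 'I_K}) (k : 'I_K).

Lemma TotBarIndE S :
  TotBarInd A S = (\sum_(a in A | a \notin S) (index a (enum A)).+1)%N.
Proof.
rewrite /TotBarInd (big_enum_val_cond (A := mem A) (fun a => a \notin S)) /=.
by apply: eq_bigr => i _; rewrite index_enum_val.
Qed.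

Lemma TotBarInd_setU1 W k : k \in A -> k \notin W ->
  (TotBarInd A (k |: W) + (index k (enum A)).+1)%N = TotBarInd A W.
Proof.
move=> kA kW; rewrite !TotBarIndE [RHS](bigD1 k) /= ?kA // addnC.
by congr (_ + _)%N; apply: eq_bigl => a; rewrite in_setU1 negb_or andbA andbAC.
Qed.

Lemma TotBarInd_setU1_notin W k : k \notin A -> TotBarInd A (k |: W) = TotBarInd A W.
Proof.
move=> kA; rewrite !TotBarIndE; apply: eq_bigl => a; rewrite in_setU1.
by case: eqP => [->|]; rewrite ?(negbTE kA).
Qed.

Lemma Ind_setU1_notin W k : k \notin L -> Ind L (k |: W) = Ind L W.
Proof.
move=> kL; apply/setP => i; rewrite !inE.
by case: eqP => [ik|] //=; have := enum_valP i; rewrite ik (negbTE kL).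
Qed.

Lemma Ind_setU1_enum_val W (j : 'I_#|L|) :
  Ind L (@enum_val _ (mem L) j |: W) = j |: Ind L W.
Proof. by apply/setP => i; rewrite !inE (inj_eq enum_val_inj). Qed.

Lemma imset_enum_val_Ind W : (@enum_val _ (mem L)) @: Ind L W = W :&: L.
Proof.
apply/setP => y; apply/imsetP/idP => [[i + ->]|]; first by rewrite !inE enum_valP andbT.
by rewrite inE => /andP[yW yL]; exists (enum_rank_in yL y); rewrite ?inE enum_rankK_in.
Qed.

Lemma index_setU1_enum_val W (j : 'I_#|L|) :
  index (@enum_val _ (mem L) j) (enum ((@enum_val _ (mem L) j |: W) :&: L))
  = index j (enum (j |: Ind L W)).
Proof.
have jWL : @enum_val _ (mem L) j \in (enum_val j |: W) :&: L.
  by rewrite inE setU11 enum_valP.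
rewrite !index_enum_set ?setU11 //.
rewrite -(card_imset _ (@enum_val_inj _ (mem L))); apply: eq_card => y.
apply/idP/imsetP => [|[i + ->]]; last first.
  by rewrite !inE (inj_eq enum_val_inj) ltn_enum_val enum_valP andbT.
rewrite !inE => /andP[/andP[yjW yL] ylt]; exists (enum_rank_in yL y); last by rewrite enum_rankK_in.
by rewrite !inE -ltn_enum_val -(inj_eq (@enum_val_inj _ (mem L))) !enum_rankK_in // ylt andbT.
Qed.

Hypothesis AnL : A \subset ~: L.

Lemma setD_of_sub_setU W : W \subset A :|: L -> W :\: L = A :&: W.
Proof.
move=> WAL; apply/setP => y; have := subsetP AnL y; have := subsetP WAL y; rewrite !inE.
by case: (y \in A); case: (y \in L); case: (y \in W) => //= h1 h2;
  [move: (h2 isT) | move: (h1 isT)].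
Qed.

Lemma card_setD_Ind t W : W \subset A :|: L -> #|A| = t.+1 -> #|W| = t ->
  #|A :\: W| = (#|Ind L W|).+1.
Proof.
move=> WAL cardA cardW.
have cardI : #|Ind L W| = #|W :&: L|.
  by rewrite -imset_enum_val_Ind card_imset //; apply: enum_val_inj.
have := cardsID W A; have := cardsID L W; rewrite setD_of_sub_setU // cardI; lia.
Qed.

Lemma index_setU1_nonleader W k : W \subset A :|: L -> k \in A -> k \notin W ->
  (index k (enum ((k |: W) :\: L)) + index k (enum (A :\: W)))%N = index k (enum A).
Proof.
move=> WAL kA kW.
have kL : k \notin L by have := subsetP AnL k kA; rewrite inE.
rewrite !index_enum_set ?inE ?kA ?kW ?kL ?eqxx //.
rewrite -(cardsID W [set y in A | (y < k)%N]); congr (_ + _)%N; apply: eq_card => y;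
  rewrite !inE; last by rewrite andbA.
case: (eqVneq y k) => [->|_]; first by rewrite ltnn !andbF.
have /setP/(_ y) := setD_of_sub_setU WAL; rewrite !inE /= => ->.
by rewrite andbAC.
Qed.

End IndexBookkeeping.

Definition alpha (F : fieldType) K (L : {set 'I_K}) (D' : 'M[F]_(K, #|L|))
    (A S : {set 'I_K}) : F :=
  (-1) ^+ TotBarInd A S * minor D' (enum (A :\: S)) (enum (Ind L S)).

Section CoefficientVanishing.
Variables (F : fieldType) (K t : nat) (L A W : {set 'I_K}).
Variables (D' : 'M[F]_(K, #|L|)) (j : 'I_#|L|).
Hypotheses (AnL : A \subset ~: L) (cardA : #|A| = t.+1).
Hypotheses (WAL : W \subset A :|: L) (cardW : #|W| = t).

Let rs := enum (A :\: W).
(* The Laplace expansion along its column [j] of the minor of [D'] with rows [A :\: W]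
   and columns [Ind L W] plus [j], up to the sign of the position of [j]. *)
Let lap := \sum_(k <- rs)
  (-1) ^+ index k rs * D' k j * minor D' (rem_nth (index k rs) rs) (enum (Ind L W)).

Let size_rs : size rs = #|Ind L W|.+1.
Proof. by rewrite -cardE (card_setD_Ind AnL WAL cardA cardW). Qed.

Lemma nonleader_term k : k \in A -> k \notin W ->
  alpha D' A (k |: W) * msg_sign F L (k |: W) k * D' k j
    = - ((-1) ^+ TotBarInd A W *
         ((-1) ^+ index k rs * D' k j * minor D' (rem_nth (index k rs) rs) (enum (Ind L W)))).
Proof.
move=> kA kW; have kL : k \notin L by have := subsetP AnL k kA; rewrite inE.
rewrite /alpha /msg_sign (negbTE kL) Ind_setU1_notin //.
have -> : A :\: (k |: W) = (A :\: W) :\ k by apply/setP => y; rewrite !inE negb_or andbA.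
rewrite enum_setD1 -/rs -(TotBarInd_setU1 kA kW) -(index_setU1_nonleader AnL WAL kA kW) -/rs.
rewrite addnS exprS !exprD -[LHS]mul1r -{1}(sqrr_sign F (index k rs)); ring.
Qed.

Lemma nonleader_terms :
  \sum_(k in A :\: W) alpha D' A (k |: W) * msg_sign F L (k |: W) k * D' k j
    = - ((-1) ^+ TotBarInd A W * lap).
Proof.
rewrite /lap big_enum /= mulr_sumr -sumrN; apply: eq_bigr => k.
by rewrite inE => /andP[kW kA]; apply: nonleader_term.
Qed.

Lemma leader_term : @enum_val _ (mem L) j \notin W ->
  alpha D' A (enum_val j |: W) * msg_sign F L (enum_val j |: W) (enum_val j)
    = (-1) ^+ TotBarInd A W * lap.
Proof.
move=> jW; have jA : @enum_val _ (mem L) j \notin A.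
  by apply/negP => /(subsetP AnL); rewrite inE enum_valP.
have jJ : j \notin Ind L W by rewrite inE.
set cs := enum (j |: Ind L W); set p := index j cs.
have size_cs : size cs = size rs by rewrite /cs -cardE cardsU1 jJ size_rs.
have lt_p : (p < size rs)%N by rewrite -size_cs index_mem mem_enum setU11.
have csp : onth cs p = Some j by rewrite onthE (nth_map j) ?nth_index ?index_mem ?mem_enum ?setU11.
have cs' : rem_nth p cs = enum (Ind L W) by rewrite /p /cs -enum_setD1 setU1K.
rewrite /alpha /msg_sign enum_valP TotBarInd_setU1_notin // Ind_setU1_enum_val.
have -> : A :\: (enum_val j |: W) = A :\: W.
  by apply/setP => y; rewrite !inE; case: eqP => [->|]; rewrite ?(negbTE jA) ?andbF.
rewrite index_setU1_enum_val -/cs -/p (minor_expand_uniq _ (enum_uniq _) lt_p csp cs').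
by rewrite mulrAC -mulrA signrMK.
Qed.

Lemma laplace_dup_col_eq0 : @enum_val _ (mem L) j \in W -> lap = 0.
Proof.
move=> jW; have jJ : j \in Ind L W by rewrite inE.
set s := enum (Ind L W); have ss : size s = #|Ind L W| by rewrite [RHS]cardE.
have lt_q : (index j s < #|Ind L W|)%N by rewrite -ss index_mem mem_enum.
have last_j : onth (rcons s j) #|Ind L W| = Some j.
  by rewrite onthE map_rcons nth_rcons size_map ss ltnn eqxx.
have dup_j : onth (rcons s j) (index j s) = Some j.
  by rewrite onthE map_rcons nth_rcons size_map ss lt_q (nth_map j) ?ss ?nth_index ?mem_enum.
have rem_last : rem_nth #|Ind L W| (rcons s j) = s.
  rewrite /rem_nth -cats1 (take_size_cat _ ss) drop_oversize ?cats0 //.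
  by rewrite size_cat ss addn1.
have lt_last : (#|Ind L W| < size rs)%N by rewrite size_rs.
have dup0 : minor D' rs (rcons s j) = 0.
  apply: (minor_eq0_dup_col D' (b1 := index j s) (b2 := #|Ind L W|)).
  - by rewrite size_rs ltnW.
  - by rewrite size_rs.
  - by rewrite ltn_eqF.
  - by rewrite last_j dup_j.
have := minor_expand_uniq D' (enum_uniq _) lt_last last_j rem_last.
by rewrite dup0 => /esym/eqP; rewrite mulf_eq0 signr_eq0 => /eqP.
Qed.

Hypothesis leader_rows :
  forall i j : 'I_#|L|, D' (@enum_val _ (mem L) i) j = (i == j)%:R.

Lemma coefficient_sum_eq0 :
  \sum_(k in (A :|: L) :\: W) alpha D' A (k |: W) * msg_sign F L (k |: W) k * D' k j = 0.
Proof.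
set eLj := @enum_val _ (mem L) j.
have D'_L k : k \in L -> D' k j = (k == eLj)%:R.
  move=> kL; rewrite -{1}(enum_rankK_in kL kL) leader_rows.
  by rewrite -(inj_eq (@enum_val_inj _ (mem L))) enum_rankK_in.
rewrite (big_setID L) /=.
have -> : ((A :|: L) :\: W) :\: L = A :\: W.
  apply/setP => y; rewrite !inE; case yA: (y \in A); last by rewrite /= andbCA andNb !andbF.
  by have := subsetP AnL y yA; rewrite inE => /negbTE ->.
rewrite nonleader_terms.
case: (boolP (eLj \in W)) => jW.
  rewrite big1 ?add0r ?laplace_dup_col_eq0 ?mulr0 ?oppr0 // => k.
  rewrite !inE => /andP[/andP[kW _] kL]; rewrite D'_L //.
  have /negbTE -> : k != eLj by apply: contraNneq kW => ->.
  by rewrite mulr0.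
rewrite (bigD1 eLj) /=; last by rewrite !inE jW enum_valP orbT.
rewrite big1 ?addr0; last first.
  by move=> k /andP[]; rewrite !inE => /andP[_ kL] /negbTE nk; rewrite D'_L // nk mulr0.
by rewrite D'_L ?enum_valP // eqxx mulr1 leader_term // addrN.
Qed.

End CoefficientVanishing.

Lemma sum_pointed_sets (T : finType) (V : nmodType) (P : pred {set T})
    (G : {set T} -> T -> V) :
  \sum_(S | P S) \sum_(k in S) G S k
    = \sum_(W : {set T}) \sum_(k | (k \notin W) && P (k |: W)) G (k |: W) k.
Proof.
rewrite pair_big_dep [RHS]pair_big_dep /=.
rewrite (reindex_onto (fun p => (p.2 |: p.1, p.2)) (fun p => (p.1 :\ p.2, p.2))) /=;
  last by move=> [S k] /andP[_ kS]; rewrite /= setD1K.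
apply: eq_bigl => -[W k] /=; rewrite setU11 andbT xpair_eqE eqxx andbT andbC.
case: (boolP (k \in W)) => kW /=; last by rewrite setU1K ?eqxx.
suff /negbTE -> : (k |: W) :\ k != W by [].
by apply/eqP => E; have := setD11 k (k |: W); rewrite E kW.
Qed.

Lemma sum_alpha_Wmsg_eq0 (F : fieldType) K N l t (D : 'M[F]_(K, N))
    (L A : {set 'I_K}) (D' : 'M[F]_(K, #|L|)) (Fs : 'I_N -> {set 'I_K} -> 'rV[F]_l) :
  (forall k : 'I_K,
     row k D = \sum_(j < #|L|) D' k j *: row (@enum_val _ (mem L) j) D) ->
  (forall i j : 'I_#|L|, D' (@enum_val _ (mem L) i) j = (i == j)%:R) ->
  A \subset ~: L -> #|A| = t.+1 ->
  \sum_(S : {set 'I_K} | (S \subset A :|: L) && (#|S| == t.+1))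
     alpha D' A S *: Wmsg D Fs L S = 0.
Proof.
move=> D_comb leader_rows AnL cardA.
pose c S k (j : 'I_#|L|) := alpha D' A S * msg_sign F L S k * D' k j.
have expand S : alpha D' A S *: Wmsg D Fs L S =
    \sum_(k in S) \sum_(j < #|L|) c S k j *: block D Fs (enum_val j) (S :\ k).
  rewrite WmsgE scaler_sumr; apply: eq_bigr => k _.
  by rewrite (block_comb Fs D_comb) !scaler_sumr; apply: eq_bigr => j _; rewrite !scalerA.
under eq_bigr do rewrite expand.
rewrite sum_pointed_sets; apply: big1 => W _.
under eq_bigr => k /andP[kW _] do rewrite setU1K //.
rewrite exchange_big /=; apply: big1 => j _; rewrite -scaler_suml.
case: (boolP ((W \subset A :|: L) && (#|W| == t))) => [/andP[WAL /eqP cardW] | notW].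
  rewrite (eq_bigl (fun k => k \in (A :|: L) :\: W)) => [|k].
    by rewrite (coefficient_sum_eq0 j AnL cardA WAL cardW) ?scale0r.
  rewrite subUset sub1set WAL andbT cardsU1 cardW !inE.
  by case: (k \in W); rewrite /= ?add1n ?eqxx ?andbT.
rewrite big_pred0 ?scale0r // => k; apply/negbTE; apply: contra notW => /and3P[kW].
by rewrite subUset => /andP[_ ->]; rewrite cardsU1 kW add1n eqSS.
Qed.

Lemma beta_alpha (F : fieldType) K (L : {set 'I_K}) (D' : 'M[F]_(K, #|L|)) A S :
  beta D' A S = - alpha D' A S.
Proof. by rewrite /beta /alpha exprD expr1 mulN1r mulNr. Qed.

Lemma alpha_self (F : fieldType) K (L A : {set 'I_K}) (D' : 'M[F]_(K, #|L|)) :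
  A \subset ~: L -> alpha D' A A = 1.
Proof.
move=> AnL; rewrite /alpha.
have -> : Ind L A = set0.
  apply/setP => i; rewrite !inE; apply/negP => /(subsetP AnL).
  by rewrite inE enum_valP.
rewrite TotBarIndE big_pred0 => [|a]; last by rewrite andbN.
by rewrite setDv !enum_set0 /minor det_mx00 mul1r.
Qed.

Lemma setI_leader_neq0 K t (L A S : {set 'I_K}) :
  #|A| = t.+1 -> S \subset A :|: L -> #|S| = t.+1 -> S != A -> S :&: L != set0.
Proof.
move=> cardA SAL cardS; apply: contraNneq => SL0.
rewrite eqEcard cardS cardA leqnn andbT; apply/subsetP => y yS.
have /setUP[//|yL] := subsetP SAL y yS.
have : y \in S :&: L by rewrite inE yS yL.
by rewrite SL0 inE.
Qed.

Unset Implicit Arguments. Set Strict Implicit.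

Theorem mainTheorem7 (F : finFieldType) (K N l t : nat)
  (D : 'M[F]_(K, N)) (L A : {set 'I_K}) (D' : 'M[F]_(K, #|L|))
  (Fs : 'I_N -> {set 'I_K} -> 'rV[F]_l) :
  (t < K)%N ->
  leader_set D L ->
  (forall k : 'I_K,
     row k D = \sum_(j < #|L|) D' k j *: row (@enum_val _ (mem L) j) D) ->
  A \subset ~: L ->
  #|A| = t.+1 ->
  Wmsg D Fs L A =
    \sum_(S : {set 'I_K} | [&& S \subset A :|: L, #|S| == t.+1 & S != A])
       beta D' A S *: Wmsg D Fs L S
  /\ (forall S : {set 'I_K},
        S \subset A :|: L -> #|S| = t.+1 -> S != A -> S :&: L != set0).
Proof.
move=> _ leaderL D_comb AnL cardA; split=> [|S]; last exact: setI_leader_neq0.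
have := sum_alpha_Wmsg_eq0 Fs D_comb (leader_coords D_comb leaderL) AnL cardA.
rewrite (bigD1 A) /= ?subsetUl ?cardA ?eqxx // alpha_self // scale1r.
move/eqP; rewrite addr_eq0 => /eqP ->; rewrite -sumrN.
by apply: eq_big => [S|S _]; rewrite ?andbA // beta_alpha scaleNr.
Qed.
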